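(* Let $p$ be the density of the centred Gaussian $\mathcal N(0,\Sigma)$ on $\mathbb{R}^d$ with $\Sigma$ positive definite. Let $\tau>0$, $y\in\mathbb{R}^d$, and define $x_0=y$ and $x_{k+1}=\alpha_k\,\mathrm{MMSE}_{\sigma_k}(x_k)+(1-\alpha_k)y$ with $\alpha_k=\frac{k+1}{k+2}$, $\sigma_k^2=\frac{\tau}{k+1}$. Then for all $k\ge0$, $$x_k-\mathrm{prox}_{-\tau\ln p}(y)=\frac{y-\mathrm{prox}_{-\tau\ln p}(y)}{k+1}.$$
   Context: For $\sigma>0$, $\mathrm{MMSE}_\sigma(z):=\mathbb{E}[X\mid X+\sigma\varepsilon=z]$ where $X\sim p$ and $\varepsilon\sim\mathcal N(0,I_d)$ are independent. $\mathrm{prox}_{-\tau\ln p}(y):=\arg\min_x\{\tfrac12\|y-x\|^2-\tau\ln p(x)\}$, which here equals $(I+\tau\Sigma^{-1})^{-1}y$. *)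

From HB Require Import structures.
From mathcomp Require Import all_boot all_order all_algebra.
From mathcomp Require Import all_classical all_reals all_analysis.
Set Implicit Arguments. Unset Strict Implicit. Unset Printing Implicit Defensive.
Import Order.TTheory GRing.Theory Num.Theory.
Local Open Scope classical_set_scope.
Local Open Scope ring_scope.

Section Defs.
Variable R : realType.

(* Iterated Lebesgue integral over R^n: coordinates are functions nat -> R,
   only coordinates 0..n-1 matter.
   iint n f = \int dx_{n-1} ... \int dx_0 f(x). *)
Fixpoint iint (n : nat) (f : (nat -> R) -> R) : R :=
  match n with
  | 0 => f (fun _ => 0)
  | n'.+1 => Rintegral (@lebesgue_measure R) setT
      (fun t => iint n' (fun v => f (fun i => if i == n' then t else v i)))
  end.

Definition intRd (d : nat) (g : 'cV[R]_d -> R) : R :=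
  iint d (fun v => g (\col_(i < d) v (nat_of_ord i))).

Definition posdef (d : nat) (S : 'M[R]_d) : Prop :=
  S^T = S /\ forall x : 'cV[R]_d, x != 0 -> 0 < (x^T *m S *m x) 0 0.

Definition sqnorm (d : nat) (x : 'cV[R]_d) : R := \sum_(i < d) x i 0 ^+ 2.

Definition gauss_density (d : nat) (S : 'M[R]_d) (x : 'cV[R]_d) : R :=
  (Num.sqrt (((2 * pi) ^+ d) * \det S))^-1 *
    expR (- (x^T *m invmx S *m x) 0 0 / 2).

Definition noise_density (d : nat) (sigma : R) (e : 'cV[R]_d) : R :=
  (Num.sqrt ((2 * pi * sigma ^+ 2) ^+ d))^-1 *
    expR (- sqnorm e / (2 * sigma ^+ 2)).

(* MMSE_sigma(z) = E[X | X + sigma eps = z], X ~ p (density), eps ~ N(0,I):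
   posterior mean computed from the joint density p(x) * phi_sigma(z - x). *)
Definition MMSE (d : nat) (p : 'cV[R]_d -> R) (sigma : R) (z : 'cV[R]_d)
  : 'cV[R]_d :=
  \col_(i < d)
    (intRd (fun x => x i 0 * p x * noise_density sigma (z - x)) /
     intRd (fun x => p x * noise_density sigma (z - x))).

(* prox_{-tau ln p}(y) := argmin_x { 1/2 ||y - x||^2 - tau ln p(x) }
   (the minimizer, chosen by xget; it exists and is unique here). *)
Definition prox_neglog (d : nat) (p : 'cV[R]_d -> R) (tau : R) (y : 'cV[R]_d)
  : 'cV[R]_d :=
  xget 0 [set x | forall x' : 'cV[R]_d,
     sqnorm (y - x) / 2 - tau * ln (p x) <= sqnorm (y - x') / 2 - tau * ln (p x')].

Definition alpha (k : nat) : R := k.+1%:R / k.+2%:R.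
Definition sigma_k (tau : R) (k : nat) : R := Num.sqrt (tau / k.+1%:R).

Fixpoint xseq (d : nat) (p : 'cV[R]_d -> R) (tau : R) (y : 'cV[R]_d) (k : nat)
  : 'cV[R]_d :=
  match k with
  | 0 => y
  | k'.+1 => alpha k' *: MMSE p (sigma_k tau k') (xseq p tau y k')
             + (1 - alpha k') *: y
  end.

End Defs.

(* For the Gaussian prior p = K exp (- x^T M x / 2), M = Sigma^-1, both
   operators of the iteration are explicit.  Completing the square in the
   strictly convex objective shows that prox_{-tau ln p}(y) is the point P with
   P + tau M P = y.  The posterior behind MMSE_sigma(z) is again Gaussian, with
   mean the stationary point m of its exponent: (M + sigma^-2) m = sigma^-2 z.
   For sigma_k^2 = tau / (k + 1) and x_k = P + (y - P) / (k + 1) that stationary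
   point is P itself, hence x_(k+1) = alpha_k P + (1 - alpha_k) y
   = P + (y - P) / (k + 2).
   The posterior mean is computed from the iterated integrals defining MMSE:
   integrating out the first coordinate of exp (- (v^T A v + b.v + c)) times an
   affine function gives a function of the same shape, with A replaced by its
   Schur complement and the stationary point preserved, so by induction on the
   dimension the integral of an affine f against the Gaussian is f(m) times its
   mass.  In dimension one this is the normal density of the library together
   with the vanishing of the centred first moment, which follows from the
   translation and reflection invariance of Lebesgue measure. *)

From HB Require Import structures.
From mathcomp Require Import all_boot all_order all_algebra.
From mathcomp Require Import all_classical all_reals all_analysis.
From mathcomp Require Import ring lra measurable_realfun.
Import Order.TTheory GRing.Theory Num.Theory.
Local Open Scope classical_set_scope.
Local Open Scope ring_scope.

Section measure_preserving.
Context {d} {T : measurableType d} {R : realType} (mu : {measure set T -> \bar R}).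
Variable phi : T -> T.
Hypotheses (mphi : measurable_fun setT phi)
  (phiP : forall A, measurable A -> mu (phi @^-1` A) = mu A).

Let integral_pushforwardE (f : T -> \bar R) :
  (\int[pushforward mu phi]_x f x = \int[mu]_x f x)%E.
Proof.
(* [pushforward mu phi] is a measure only given [mphi]: [unshelve] asks for it. *)
unshelve refine (eq_measure_integral mu (m1 := pushforward mu phi
  : {measure set _ -> \bar R}) _) => //.
by move=> A mA _; exact: phiP.
Qed.

Lemma ge0_integral_preserving (f : T -> \bar R) :
  measurable_fun setT f -> (forall x, 0 <= f x)%E ->
  (\int[mu]_x f (phi x) = \int[mu]_x f x)%E.
Proof.
by move=> mf f0; rewrite -[RHS]integral_pushforwardE ge0_integral_pushforward.
Qed.

Lemma integrable_preserving (f : T -> \bar R) :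
  mu.-integrable setT f -> mu.-integrable setT (f \o phi).
Proof.
case/integrableP => mf If; apply/integrableP; split; first exact: measurableT_comp.
rewrite (ge0_integral_preserving (fun x => `|f x|)%E) //.
exact: measurableT_comp.
Qed.

Lemma Rintegral_preserving (f : T -> R) : mu.-integrable setT (EFin \o f) ->
  \int[mu]_x f (phi x) = \int[mu]_x f x.
Proof.
move=> If; have /integrableP[mf _] := If.
rewrite /Rintegral -[in RHS]integral_pushforwardE integral_pushforward //.
exact: integrable_preserving.
Qed.

End measure_preserving.

Section lebesgue_invariance.
Context {R : realType}.
Local Notation mu := (@lebesgue_measure R).

Lemma lebesgue_measure_shift (c : R) A : measurable A ->
  mu ((fun x => x + c) @^-1` A) = mu A.
Proof.
move=> mA; symmetry.
unshelve refine (@lebesgue_measure_unique R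
  (pushforward mu ((fun x => x + c) : _ -> measurableTypeR R)
    : {measure set _ -> \bar R}) _ A mA).
  by apply: measurable_funD.
move=> /= _ [[a b]] _ <-; rewrite /pushforward /=.
have -> : (fun x => x + c) @^-1` `]a, b]%classic = `]a - c, b - c]%classic.
  by apply/seteqP; split => x /=; rewrite !in_itv /= ltrBlDr lerBrDr.
rewrite !lebesgue_measure_itv /= !lte_fin ltrD2r; congr (if _ then _ else _).
by rewrite -!EFinD; congr (_%:E); lra.
Qed.

Lemma Rintegral_shift (f : R -> R) c : mu.-integrable setT (EFin \o f) ->
  \int[mu]_x f (x + c) = \int[mu]_x f x.
Proof.
move=> If; apply: (Rintegral_preserving mu (fun x => x + c)) => //.
- by apply: measurable_funD.
- exact: lebesgue_measure_shift.
Qed.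

Lemma Rintegral_opp (f : R -> R) : mu.-integrable setT (EFin \o f) ->
  \int[mu]_x f (- x) = \int[mu]_x f x.
Proof.
move=> If; apply: (Rintegral_preserving mu -%R) => //.
exact: lebesgue_measureN.
Qed.

End lebesgue_invariance.

Section gaussian_integrals.
Context {R : realType}.
Local Notation mu := (@lebesgue_measure R).

Definition gaussian (a m t : R) := expR (- (a * (t - m) ^+ 2)).

Lemma gaussian_normal_fun a m : 0 < a ->
  gaussian a m = normal_fun m (Num.sqrt ((a *+ 2)^-1)).
Proof.
move=> a0; apply/funext => t; rewrite /gaussian /normal_fun.
rewrite sqr_sqrtr; last by rewrite invr_ge0 mulrn_wge0 // ltW.
by congr expR; rewrite !mulr2n; field; rewrite gt_eqF // addr_gt0.
Qed.

Lemma gaussian_gt0 a m t : 0 < gaussian a m t.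
Proof. exact: expR_gt0. Qed.

Lemma measurable_gaussian a m : 0 < a -> measurable_fun setT (gaussian a m).
Proof. by move=> a0; rewrite gaussian_normal_fun //; exact: measurable_normal_fun. Qed.

Lemma integrable_gaussian a m : 0 < a ->
  mu.-integrable setT (EFin \o gaussian a m).
Proof.
move=> a0; set s := Num.sqrt ((a *+ 2)^-1).
have s0 : s != 0 by rewrite gt_eqF // sqrtr_gt0 invr_gt0 mulrn_wgt0.
apply: eq_integrable (integrableZl measurableT (normal_peak s)^-1
  (integrable_normal_pdf m s)) => // t _.
rewrite normal_pdfE //= -EFinM mulrA mulVf ?mul1r ?gaussian_normal_fun //.
by rewrite gt_eqF // normal_peak_gt0.
Qed.

Lemma Rintegral_gaussian a m : 0 < a ->
  \int[mu]_t gaussian a m t = Num.sqrt (pi / a).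
Proof.
move=> a0; set s := Num.sqrt ((a *+ 2)^-1).
have s0 : s != 0 by rewrite gt_eqF // sqrtr_gt0 invr_gt0 mulrn_wgt0.
have pk : normal_peak s != 0 by rewrite gt_eqF // normal_peak_gt0.
have -> : gaussian a m = fun t => (normal_peak s)^-1 * normal_pdf m s t.
  apply/funext => t; rewrite normal_pdfE //= mulrA mulVf // mul1r.
  by rewrite gaussian_normal_fun.
rewrite RintegralZl //; last exact: integrable_normal_pdf.
rewrite /Rintegral integral_normal_pdf /= mulr1 /normal_peak invrK.
congr Num.sqrt; rewrite /s sqr_sqrtr; last by rewrite invr_ge0 mulrn_wge0 // ltW.
by rewrite !mulr2n; field; rewrite !gt_eqF // addr_gt0.
Qed.

Lemma normr_centred_gaussian_le a m t : 0 < a ->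
  `|(t - m) * gaussian a m t| <= (1 + (a *+ 2)^-1) * gaussian (a / 2) m t.
Proof.
move=> a0; set u := t - m; set K := 1 + (a *+ 2)^-1.
have K0 : 0 <= K by rewrite addr_ge0 // invr_ge0 mulrn_wge0 // ltW.
have gE : gaussian a m t = gaussian (a / 2) m t * gaussian (a / 2) m t.
  by rewrite /gaussian -expRD -/u; congr expR; field.
(* AM-GM: [|u| <= a u^2 / 2 + 1 / (2 a)] *)
have amgm : `|u| <= K * (1 + a / 2 * u ^+ 2).
  have u2 : `|u| ^+ 2 = u ^+ 2 by rewrite real_normK ?num_real.
  have sq : 0 <= (a * `|u| - 1) ^+ 2 / (a *+ 2).
    by rewrite divr_ge0 ?sqr_ge0 ?mulrn_wge0 ?ltW.
  have -> : K * (1 + a / 2 * u ^+ 2) =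
      (a * `|u| - 1) ^+ 2 / (a *+ 2) + `|u| + 1 + u ^+ 2 / 4.
    by rewrite /K -u2 mulr2n; field; rewrite gt_eqF // addr_gt0.
  by have := sqr_ge0 u; lra.
have le_exp : `|u| <= K * expR (a / 2 * u ^+ 2).
  by apply: (le_trans amgm); rewrite ler_wpM2l // expR_ge1Dx.
rewrite normrM (ger0_norm (ltW (gaussian_gt0 _ _ _))) gE mulrA.
rewrite ler_pM2r ?gaussian_gt0 //.
have -> : K = K * expR (a / 2 * u ^+ 2) * gaussian (a / 2) m t.
  by rewrite /gaussian -/u -mulrA -expRD addrN expR0 mulr1.
by rewrite ler_pM2r ?gaussian_gt0.
Qed.

Lemma integrable_centred_gaussian a m : 0 < a ->
  mu.-integrable setT (fun t => ((t - m) * gaussian a m t)%:E).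
Proof.
move=> a0; have a2 : 0 < a / 2 by rewrite divr_gt0.
apply: (le_integrable measurableT _ _ (integrableZl measurableT (1 + (a *+ 2)^-1)
  (integrable_gaussian _ m a2))).
- apply/measurable_EFinP/measurable_funM; first exact: measurable_funB.
  exact: measurable_gaussian.
- move=> t _ /=; rewrite lee_fin.
  exact: le_trans (normr_centred_gaussian_le a m t a0) (ler_norm _).
Qed.

Lemma Rintegral_centred_gaussian a m : 0 < a ->
  \int[mu]_t ((t - m) * gaussian a m t) = 0.
Proof.
move=> a0; pose g u := u * gaussian a 0 u.
have Ig : mu.-integrable setT (EFin \o g).
  apply: eq_integrable (integrable_centred_gaussian a 0 a0) => // t _.
  by rewrite /g subr0.
have gN u : g (- u) = -1 * g u by rewrite /g /gaussian !subr0 sqrrN mulN1r mulNr.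
have -> : \int[mu]_t ((t - m) * gaussian a m t) = \int[mu]_t g (t + - m).
  by apply: eq_Rintegral => t _; rewrite /g /gaussian !subr0.
rewrite Rintegral_shift //.
have := Rintegral_opp _ Ig; under eq_Rintegral do rewrite gN.
by rewrite RintegralZl //; lra.
Qed.

Lemma Rintegral_affine_gaussian a B C al be : 0 < a ->
  \int[mu]_t ((al + be * t) * expR (- (a * t ^+ 2 + B * t + C))) =
  (al - be * B / (2 * a)) * Num.sqrt (pi / a) * expR (B ^+ 2 / (4 * a) - C).
Proof.
move=> a0; set m := - B / (2 * a); set K := expR (B ^+ 2 / (4 * a) - C).
have intZ k f : mu.-integrable setT (EFin \o f) ->
    mu.-integrable setT (EFin \o (fun t => k * f t)).
  by move=> If; apply: eq_integrable (integrableZl measurableT k If).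
have -> : (fun t => (al + be * t) * expR (- (a * t ^+ 2 + B * t + C))) =
    fun t => K * (al + be * m) * gaussian a m t + K * be * ((t - m) * gaussian a m t).
  apply/funext => t; rewrite /gaussian /K.
  have -> : - (a * t ^+ 2 + B * t + C) = (B ^+ 2 / (4 * a) - C) + - (a * (t - m) ^+ 2).
    by rewrite /m; field; rewrite gt_eqF.
  by rewrite expRD; ring.
rewrite RintegralD //;
  [|exact/intZ/integrable_gaussian|exact/intZ/integrable_centred_gaussian].
rewrite !RintegralZl //; [|exact: integrable_centred_gaussian|exact: integrable_gaussian].
rewrite Rintegral_gaussian // Rintegral_centred_gaussian // mulr0 addr0 /m.
by field; rewrite gt_eqF.
Qed.

End gaussian_integrals.

Section iterated_gaussian_integrals.
Context {R : realType}.
Local Notation mu := (@lebesgue_measure R).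
Implicit Types (n : nat) (A : nat -> nat -> R) (b p v w : nat -> R) (c t : R).

Definition vcons t w : nat -> R := fun i => if i is j.+1 then w j else t.

Lemma iint_vcons n (f : (nat -> R) -> R) :
  iint n.+1 f = iint n (fun w => \int[mu]_t f (vcons t w)).
Proof.
elim: n f => [|n IH] f.
  by rewrite /=; congr Rintegral; apply/funext => t; congr f; apply/funext; case.
transitivity (\int[mu]_t iint n.+1 (fun v => f (fun i => if i == n.+1 then t else v i)));
  first by [].
rewrite (_ : (fun t => _) = fun t =>
  iint n (fun w => \int[mu]_s f (vcons s (fun i => if i == n then t else w i)))) //.
apply/funext => t; rewrite IH; congr iint; apply/funext => w.
by congr Rintegral; apply/funext => s; congr f; apply/funext; case.
Qed.

Definition lform n b v := \sum_(i < n) b i * v i.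
Definition qform n A v := \sum_(i < n) \sum_(j < n) A i j * v i * v j.
Definition gexp n A b c v := expR (- (qform n A v + lform n b v + c)).

Definition posdef_form n A :=
  forall v, (exists i : 'I_n, v i != 0) -> 0 < qform n A v.
Definition stationary n A b v :=
  forall i : 'I_n, \sum_(j < n) (A i j + A j i) * v j + b i = 0.

Lemma lformE n b v :
  lform n.+1 b v = b 0%N * v 0%N + lform n (fun i => b i.+1) (fun i => v i.+1).
Proof. by rewrite /lform big_ord_recl. Qed.

Lemma lform_vcons n b t w :
  lform n.+1 b (vcons t w) = b 0%N * t + lform n (fun i => b i.+1) w.
Proof. exact: lformE. Qed.

Lemma lform0 n v : lform n (fun=> 0) v = 0.
Proof. by rewrite /lform big1 // => i _; rewrite mul0r. Qed.

Lemma lformv0 n b : lform n b (fun=> 0) = 0.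
Proof. by rewrite /lform big1 // => i _; rewrite mulr0. Qed.

Lemma lformB n b b' v : lform n (fun i => b i - b' i) v = lform n b v - lform n b' v.
Proof. by rewrite /lform -sumrB; apply: eq_bigr => i _; ring. Qed.

Lemma lformZ n k b v : lform n (fun i => k * b i) v = k * lform n b v.
Proof. by rewrite /lform mulr_sumr; apply: eq_bigr => i _; ring. Qed.

Lemma qformB n A A' v :
  qform n (fun i j => A i j - A' i j) v = qform n A v - qform n A' v.
Proof.
rewrite /qform -sumrB; apply: eq_bigr => i _; rewrite -sumrB.
by apply: eq_bigr => j _; ring.
Qed.

Lemma qform_rank1 n k b v : qform n (fun i j => k * b i * b j) v = k * lform n b v ^+ 2.
Proof.
rewrite /qform /lform expr2 big_distrl mulr_sumr; apply: eq_bigr => i _ /=.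
by rewrite big_distrr mulr_sumr; apply: eq_bigr => j _ /=; ring.
Qed.

Lemma qformv0 n A : qform n A (fun=> 0) = 0.
Proof. by rewrite /qform big1 // => i _; rewrite big1 // => j _; rewrite !mulr0. Qed.

Definition cross A j := A 0%N j.+1 + A j.+1 0%N.

Lemma qform_vcons n A t w : qform n.+1 A (vcons t w) =
  A 0%N 0%N * t ^+ 2 + lform n (cross A) w * t + qform n (fun i j => A i.+1 j.+1) w.
Proof.
rewrite /qform /lform; under eq_bigr do rewrite big_ord_recl.
rewrite big_split /= big_ord_recl [X in _ + X = _]big_ord_recl /= /vcons /bump /=.
under eq_bigr do rewrite add1n /=.
under [X in _ + (X + _) = _]eq_bigr do rewrite add1n /=.
under [X in _ + (_ + X) = _]eq_bigr do (under eq_bigr do rewrite !add1n /=).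
rewrite mulr_suml -!addrA; congr (_ + _); first by rewrite expr2 mulrA.
rewrite !addrA; congr (_ + _); rewrite -big_split /=.
by apply: eq_bigr => i _; rewrite add0n /cross; ring.
Qed.

Section schur_complement.
Variable A : nat -> nat -> R.
Let a := A 0%N 0%N.

Definition schur i j := A i.+1 j.+1 - (4 * a)^-1 * cross A i * cross A j.
Definition schur_lin b i := b i.+1 - b 0%N / (2 * a) * cross A i.
Definition schur_const b c := c - b 0%N ^+ 2 / (4 * a) - ln (Num.sqrt (pi / a)).

Lemma posdef_form_head n : posdef_form n.+1 A -> 0 < a.
Proof.
move=> pdA; have := pdA (vcons 1 (fun=> 0)).
rewrite qform_vcons lformv0 qformv0 expr1n mulr1 mul0r !addr0; apply.
by exists ord0; rewrite oner_neq0.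
Qed.

Hypothesis a_gt0 : 0 < a.

Lemma Rintegral_affine_gexp_vcons n b c (p0 : R) p w :
  \int[mu]_t ((p0 + lform n.+1 p (vcons t w)) * gexp n.+1 A b c (vcons t w)) =
  (p0 - p 0%N * b 0%N / (2 * a) + lform n (schur_lin p) w) *
    gexp n schur (schur_lin b) (schur_const b c) w.
Proof.
set al := p0 + lform n (fun i => p i.+1) w; set B := lform n (cross A) w + b 0%N.
set C := qform n (fun i j => A i.+1 j.+1) w + lform n (fun i => b i.+1) w + c.
transitivity (\int[mu]_t ((al + p 0%N * t) * expR (- (a * t ^+ 2 + B * t + C)))).
  apply: eq_Rintegral => t _; rewrite /gexp qform_vcons !lform_vcons.
  by rewrite /al /B /C -/a; congr (_ * expR _); ring.
rewrite Rintegral_affine_gaussian // /gexp.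
have -> : - (qform n schur w + lform n (schur_lin b) w + schur_const b c) =
    B ^+ 2 / (4 * a) - C + ln (Num.sqrt (pi / a)).
  rewrite /schur qformB qform_rank1 /schur_lin lformB lformZ /schur_const /B /C.
  by field; rewrite gt_eqF.
rewrite (expRD (B ^+ 2 / (4 * a) - C)) lnK ?posrE ?sqrtr_gt0 ?divr_gt0 ?pi_gt0 //.
by rewrite /schur_lin lformB lformZ /al /B; field; rewrite gt_eqF.
Qed.

Lemma Rintegral_gexp_vcons n b c w :
  \int[mu]_t gexp n.+1 A b c (vcons t w) = gexp n schur (schur_lin b) (schur_const b c) w.
Proof.
have := Rintegral_affine_gexp_vcons n b c 1 (fun=> 0) w.
under eq_Rintegral do rewrite lform0 addr0 mul1r.
move=> ->; rewrite /= mul0r mul0r subr0 (_ : lform _ _ _ = 0) ?addr0 ?mul1r //.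
by rewrite /lform big1 // => i _; rewrite /schur_lin /= !mul0r subr0 mul0r.
Qed.

Lemma posdef_form_schur n : posdef_form n.+1 A -> posdef_form n schur.
Proof.
move=> pdA w [i wi]; set L := lform n (cross A) w.
have := pdA (vcons (- L / (2 * a)) w); rewrite qform_vcons -/L.
rewrite /schur qformB qform_rank1 -/L.
have -> : a * (- L / (2 * a)) ^+ 2 + L * (- L / (2 * a)) = - ((4 * a)^-1 * L ^+ 2).
  by field; rewrite gt_eqF.
by rewrite addrC; apply; exists (lift ord0 i).
Qed.

Lemma stationary_head {n b m} : stationary n.+1 A b m ->
  lform n (cross A) (fun i => m i.+1) = - (2 * a * m 0%N) - b 0%N.
Proof.
move/(_ ord0); rewrite big_ord_recl; under eq_bigr do rewrite lift0.
move=> /= st0.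
by apply/eqP; rewrite -subr_eq0 -st0 /lform /cross /a; apply/eqP; ring.
Qed.

Lemma stationary_schur n b m : stationary n.+1 A b m ->
  stationary n schur (schur_lin b) (fun i => m i.+1).
Proof.
move=> stA i; have := stA (lift ord0 i).
rewrite big_ord_recl lift0; under eq_bigr do rewrite lift0.
move=> /= sti.
have L := stationary_head stA.
have -> : \sum_(j < n) (schur i j + schur j i) * m j.+1 =
    \sum_(j < n) (A i.+1 j.+1 + A j.+1 i.+1) * m j.+1 -
    (2 * a)^-1 * cross A i * lform n (cross A) (fun k => m k.+1).
  rewrite /lform mulr_sumr -sumrB; apply: eq_bigr => j _; rewrite /schur.
  by field; rewrite gt_eqF.
set S := \sum_(j < n) _ in sti *.
have -> : S = - ((A i.+1 0%N + A 0%N i.+1) * m 0%N) - b i.+1.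
  by apply/eqP; rewrite -subr_eq0 -sti; apply/eqP; ring.
by rewrite L /schur_lin /cross /a; field; rewrite gt_eqF.
Qed.

Lemma affine_schur_stationary n b m (p0 : R) p : stationary n.+1 A b m ->
  p0 - p 0%N * b 0%N / (2 * a) + lform n (schur_lin p) (fun i => m i.+1) =
  p0 + lform n.+1 p m.
Proof.
move=> stA; rewrite lformE /schur_lin lformB lformZ (stationary_head stA).
by field; rewrite gt_eqF.
Qed.

End schur_complement.
Arguments posdef_form_head {A n}.
Arguments posdef_form_schur {A} a_gt0 {n}.
Arguments stationary_schur {A} a_gt0 {n b m}.

Lemma iint_gexp_gt0 n A b c : posdef_form n A -> 0 < iint n (gexp n A b c).
Proof.
elim: n A b c => [|n IH] A b c pdA; first exact: expR_gt0.
have a0 := posdef_form_head pdA.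
rewrite iint_vcons (_ : (fun w => _) =
  gexp n (schur A) (schur_lin A b) (schur_const A b c)).
  exact/IH/posdef_form_schur.
by apply/funext => w; exact: Rintegral_gexp_vcons.
Qed.

Lemma iint_affine_gexp n A b c m (p0 : R) p :
  posdef_form n A -> stationary n A b m ->
  iint n (fun v => (p0 + lform n p v) * gexp n A b c v) =
  (p0 + lform n p m) * iint n (gexp n A b c).
Proof.
elim: n A b c m p0 p => [|n IH] A b c m p0 p pdA stA.
  by rewrite /= /lform !big_ord0.
have a0 := posdef_form_head pdA.
rewrite iint_vcons (_ : (fun w => _) = fun w =>
  (p0 - p 0%N * b 0%N / (2 * A 0%N 0%N) + lform n (schur_lin A p) w) *
    gexp n (schur A) (schur_lin A b) (schur_const A b c) w); last first.
  by apply/funext => w; exact: Rintegral_affine_gexp_vcons.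
rewrite (IH _ _ _ _ _ _ (posdef_form_schur a0 pdA) (stationary_schur a0 stA)).
rewrite affine_schur_stationary // iint_vcons; congr (_ * iint _ _).
by apply/funext => w; rewrite Rintegral_gexp_vcons.
Qed.

End iterated_gaussian_integrals.

Section dot_product.
Context {R : realType} {n : nat}.
Implicit Types (u v w x : 'cV[R]_n) (A : 'M[R]_n).

Definition dot u v := \sum_(i < n) u i 0 * v i 0.

Lemma dotE u v : (u^T *m v) 0 0 = dot u v.
Proof. by rewrite mxE /dot; apply: eq_bigr => i _; rewrite mxE. Qed.

Lemma quadE A x : (x^T *m A *m x) 0 0 = dot x (A *m x).
Proof. by rewrite -mulmxA dotE. Qed.

Lemma dotC u v : dot u v = dot v u.
Proof. by apply: eq_bigr => i _; rewrite mulrC. Qed.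

Lemma dotDl u v w : dot (u + v) w = dot u w + dot v w.
Proof. by rewrite /dot -big_split; apply: eq_bigr => i _; rewrite mxE mulrDl. Qed.

Lemma dotZl k u v : dot (k *: u) v = k * dot u v.
Proof. by rewrite /dot mulr_sumr; apply: eq_bigr => i _; rewrite mxE mulrA. Qed.

Lemma dotNl u v : dot (- u) v = - dot u v.
Proof. by rewrite -scaleN1r dotZl mulN1r. Qed.

Lemma dotDr u v w : dot u (v + w) = dot u v + dot u w.
Proof. by rewrite dotC dotDl !(dotC u). Qed.

Lemma dotZr k u v : dot u (k *: v) = k * dot u v.
Proof. by rewrite dotC dotZl dotC. Qed.

Lemma dotNr u v : dot u (- v) = - dot u v.
Proof. by rewrite dotC dotNl dotC. Qed.

Lemma dotBB u v : dot (u - v) (u - v) = dot u u - 2 * dot u v + dot v v.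
Proof. by rewrite dotDl !dotDr !dotNl !dotNr (dotC v u); ring. Qed.

Lemma dot_trmx A u v : dot u (A *m v) = dot (A^T *m u) v.
Proof. by rewrite -!dotE trmx_mul trmxK mulmxA. Qed.

Lemma dot_ge0 x : 0 <= dot x x.
Proof. by apply: sumr_ge0 => i _; rewrite -expr2 sqr_ge0. Qed.

Lemma dot_gt0 x : x != 0 -> 0 < dot x x.
Proof.
move=> x0; have [i xi] : exists i, x i 0 != 0.
  apply: contra_notP (negP x0) => H; apply/eqP/matrixP => i j.
  by rewrite ord1 mxE; apply/eqP/negPn/negP => h; apply: H; exists i.
rewrite /dot (bigD1 i) //= ltr_pwDl ?sumr_ge0 // => [|j _].
  by rewrite -expr2 exprn_even_gt0 //= xi.
by rewrite -expr2 sqr_ge0.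
Qed.

Lemma sqnormE x : sqnorm x = dot x x.
Proof. by apply: eq_bigr => i _; rewrite expr2. Qed.

End dot_product.

Section posdef_matrix.
Context {R : realType} {n : nat}.

Lemma posdef_unitmx (A : 'M[R]_n) :
  (forall x : 'cV[R]_n, x != 0 -> 0 < (x^T *m A *m x) 0 0) -> A \in unitmx.
Proof.
move=> posA; rewrite -row_free_unit; apply/negPn/negP => nfree.
have [i Ki] : exists i, row i (kermx A) != 0.
  have : kermx A != 0 by rewrite kermx_eq0.
  apply: contra_neqP => H; apply/row_matrixP => i; rewrite row0.
  by apply/eqP/negPn/negP => h; apply: H; exists i.
have := posA (row i (kermx A))^T; rewrite trmx_eq0 => /(_ Ki).
by rewrite trmxK -row_mul mulmx_ker row0 mul0mx mxE ltxx.
Qed.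

(* The segment from 1 to A consists of positive definite, hence invertible,
   matrices, so the determinant keeps the sign of det 1 = 1 along it. *)
Lemma posdef_det_gt0 (A : 'M[R]_n) :
  (forall x : 'cV[R]_n, x != 0 -> 0 < (x^T *m A *m x) 0 0) -> 0 < \det A.
Proof.
move=> posA.
pose q : {poly R} := \det (\matrix_(i, j)
  ('X * ((1%:M : 'M[R]_n) i j)%:P + (1 - 'X) * (A i j)%:P)).
have qE t : q.[t] = \det (t *: 1%:M + (1 - t) *: A).
  rewrite -horner_evalE /q -det_map_mx; congr (\det _).
  by apply/matrixP => i j; rewrite !mxE /= horner_evalE !hornerE.
have q_neq0 t : 0 <= t <= 1 -> q.[t] != 0.
  case/andP => t0 t1; rewrite qE -unitfE -unitmxE; apply: posdef_unitmx => x x0.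
  rewrite mulmxDr mulmxDl -!scalemxAr -!scalemxAl mulmx1.
  rewrite mxE [X in X + _]mxE [X in _ + X]mxE dotE.
  have := dot_gt0 x x0; have := posA x x0.
  case: (eqVneq t 0) => [-> ? ?|tn0 ? ?]; first by rewrite mul0r add0r subr0 mul1r.
  have : 0 < t by rewrite lt_def tn0.
  nra.
rewrite ltNge; apply/negP => detA.
have q0 : q.[0] <= 0 by rewrite qE scale0r add0r subr0 scale1r.
have q1 : 0 <= q.[1] by rewrite qE subrr scale0r addr0 scale1r det1.
have [t /andP[t0 t1] /rootP qt] := poly_ivt ler01 (introT andP (conj q0 q1)).
by move: (q_neq0 t); rewrite t0 t1 qt eqxx => /(_ isT).
Qed.

Lemma posdef_invmx_ge0 (S : 'M[R]_n) :
  (forall x : 'cV[R]_n, x != 0 -> 0 < (x^T *m S *m x) 0 0) ->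
  forall x, 0 <= dot x (invmx S *m x).
Proof.
move=> posS x; set w := invmx S *m x.
have -> : x = S *m w by rewrite /w mulmxA mulmxV ?mul1mx // posdef_unitmx.
rewrite dotC -quadE; have [->|w0] := eqVneq w 0; last exact/ltW/posS.
by rewrite trmx0 !mul0mx mxE.
Qed.

End posdef_matrix.

Section gaussian_integrals_on_cV.
Context {R : realType} {d : nat}.
Implicit Types (A : 'M[R]_d) (b m x : 'cV[R]_d) (v : nat -> R).

(* Matrices and vectors extended by zero to the coordinates [nat -> R] of [iint]. *)
Definition extmx A : nat -> nat -> R := fun i j =>
  match (insub i : option 'I_d), (insub j : option 'I_d) with
  | Some i', Some j' => A i' j'
  | _, _ => 0
  end.
Definition extcv b : nat -> R := fun i =>
  if (insub i : option 'I_d) is Some i' then b i' 0 else 0.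
Definition colv v : 'cV[R]_d := \col_(i < d) v i.

Lemma extmx_ord A (i j : 'I_d) : extmx A i j = A i j.
Proof. by rewrite /extmx !valK. Qed.

Lemma extcv_ord b (i : 'I_d) : extcv b i = b i 0.
Proof. by rewrite /extcv valK. Qed.

Lemma qform_extmx A v : qform d (extmx A) v = dot (colv v) (A *m colv v).
Proof.
apply: eq_bigr => i _; rewrite !mxE mulr_sumr; apply: eq_bigr => j _.
by rewrite extmx_ord !mxE; ring.
Qed.

Lemma lform_extcv b v : lform d (extcv b) v = dot b (colv v).
Proof. by apply: eq_bigr => i _; rewrite extcv_ord mxE. Qed.

Lemma lform_delta (i : 'I_d) v : lform d (extcv (delta_mx i 0)) v = v i.
Proof.
rewrite lform_extcv /dot (bigD1 i) //= big1 => [|j ji].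
  by rewrite !mxE eqxx mul1r addr0.
by rewrite mxE (negbTE ji) mul0r.
Qed.

Lemma posdef_form_extmx A :
  (forall x, x != 0 -> 0 < (x^T *m A *m x) 0 0) -> posdef_form d (extmx A).
Proof.
move=> posA v [i vi]; rewrite qform_extmx -quadE; apply: posA.
by apply: contraNneq vi => /matrixP/(_ i 0); rewrite !mxE => ->.
Qed.

Lemma stationary_extmx A b m :
  (A + A^T) *m m + b = 0 -> stationary d (extmx A) (extcv b) (extcv m).
Proof.
move=> /matrixP st i; have := st i 0; rewrite !mxE => sti.
rewrite -[RHS]sti extcv_ord; congr (_ + _).
by apply: eq_bigr => j _; rewrite !extmx_ord extcv_ord !mxE.
Qed.

Definition gexp_mx A b c x := expR (- (dot x (A *m x) + dot b x + c)).

Lemma gexp_mx_colv A b c v :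
  gexp_mx A b c (colv v) = gexp d (extmx A) (extcv b) c v.
Proof. by rewrite /gexp_mx /gexp qform_extmx lform_extcv. Qed.

Lemma intRd_gexp_mx A b c :
  intRd (gexp_mx A b c) = iint d (gexp d (extmx A) (extcv b) c).
Proof. by rewrite /intRd; congr iint; apply/funext => v; exact: gexp_mx_colv. Qed.

Lemma intRd_gexp_mx_gt0 A b c :
  (forall x, x != 0 -> 0 < (x^T *m A *m x) 0 0) -> 0 < intRd (gexp_mx A b c).
Proof.
by move=> posA; rewrite intRd_gexp_mx; exact/iint_gexp_gt0/posdef_form_extmx.
Qed.

Lemma intRd_coord_gexp_mx A b c m i :
  (forall x, x != 0 -> 0 < (x^T *m A *m x) 0 0) -> (A + A^T) *m m + b = 0 ->
  intRd (fun x => x i 0 * gexp_mx A b c x) = m i 0 * intRd (gexp_mx A b c).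
Proof.
move=> posA st; rewrite intRd_gexp_mx.
have := iint_affine_gexp _ _ _ c _ 0 (extcv (delta_mx i 0))
  (posdef_form_extmx _ posA) (stationary_extmx _ _ _ st).
rewrite add0r lform_delta extcv_ord => <-; rewrite /intRd; congr iint.
by apply/funext => v; rewrite add0r lform_delta gexp_mx_colv mxE.
Qed.

End gaussian_integrals_on_cV.

Section gaussian_prior.
Context {R : realType} {d : nat}.
Variables (K : R) (M : 'M[R]_d).
Hypotheses (K_gt0 : 0 < K) (M_sym : M^T = M)
  (M_psd : forall x : 'cV[R]_d, 0 <= dot x (M *m x)).

Definition gprior (x : 'cV[R]_d) := K * expR (- (x^T *m M *m x) 0 0 / 2).

Lemma MMSE_gprior sig z m : 0 < sig ->
  M *m m + (sig ^+ 2)^-1 *: m = (sig ^+ 2)^-1 *: z -> MMSE gprior sig z = m.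
Proof.
move=> sig0 hm; have s2 : 0 < sig ^+ 2 := exprn_gt0 2 sig0.
set A := 2^-1 *: M + (2 * sig ^+ 2)^-1 *: 1%:M.
set b := - ((sig ^+ 2)^-1 *: z).
set N := (Num.sqrt ((2 * pi * sig ^+ 2) ^+ d))^-1.
set c := dot z z / (2 * sig ^+ 2) - ln (K * N).
have N_gt0 : 0 < N by rewrite invr_gt0 sqrtr_gt0 exprn_gt0 // !mulr_gt0 // pi_gt0.
have quadA x : dot x (A *m x) = 2^-1 * dot x (M *m x) + (2 * sig ^+ 2)^-1 * dot x x.
  by rewrite mulmxDl -!scalemxAl mul1mx dotDr !dotZr.
have jointE x : gprior x * noise_density sig (z - x) = gexp_mx A b c x.
  rewrite /gprior /noise_density /gexp_mx quadE quadA sqnormE dotBB.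
  rewrite /b dotNl dotZl /c -/N.
  have -> : - (2^-1 * dot x (M *m x) + (2 * sig ^+ 2)^-1 * dot x x +
        - ((sig ^+ 2)^-1 * dot z x) + (dot z z / (2 * sig ^+ 2) - ln (K * N))) =
      - dot x (M *m x) / 2 + - (dot z z - 2 * dot z x + dot x x) / (2 * sig ^+ 2)
        + ln (K * N).
    by field; rewrite gt_eqF.
  by rewrite !expRD lnK ?posrE ?mulr_gt0 //; ring.
have posA (x : 'cV_d) : x != 0 -> 0 < (x^T *m A *m x) 0 0.
  move=> x0; rewrite quadE quadA ltr_wpDl ?mulr_ge0 ?invr_ge0 //.
  by rewrite mulr_gt0 ?invr_gt0 ?mulr_gt0 ?dot_gt0.
have stA : (A + A^T) *m m + b = 0.
  have -> : A + A^T = M + (sig ^+ 2)^-1 *: 1%:M.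
    rewrite /A linearD !linearZ /= M_sym trmx1.
    by apply/matrixP => i j; rewrite !mxE; field; rewrite gt_eqF.
  by rewrite mulmxDl -scalemxAl mul1mx hm /b subrr.
apply/matrixP => i j; rewrite ord1 mxE {j}.
rewrite (_ : (fun x : 'cV_d => x i 0 * gprior x * noise_density sig (z - x)) =
  fun x => x i 0 * gexp_mx A b c x); last by apply/funext => x; rewrite -mulrA jointE.
rewrite (_ : (fun x : 'cV_d => gprior x * noise_density sig (z - x)) = gexp_mx A b c).
  by rewrite (intRd_coord_gexp_mx _ _ _ m) // mulfK // gt_eqF // intRd_gexp_mx_gt0.
by apply/funext => x; exact: jointE.
Qed.

Lemma prox_gprior tau y P : 0 < tau ->
  P + tau *: (M *m P) = y -> prox_neglog gprior tau y = P.
Proof.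
move=> tau0 hP.
pose f x := sqnorm (y - x) / 2 - tau * ln (gprior x).
have fE e : f (P + e) = f P + (dot e e + tau * dot e (M *m e)) / 2.
  have lnE x : ln (gprior x) = ln K - dot x (M *m x) / 2.
    by rewrite /gprior lnM ?posrE ?expR_gt0 // expRK quadE mulNr.
  rewrite /f !lnE.
  have -> : y - (P + e) = tau *: (M *m P) - e by rewrite -hP opprD addrACA subrr add0r.
  have -> : y - P = tau *: (M *m P) by rewrite -hP addrC addKr.
  rewrite !sqnormE dotBB mulmxDr !dotDl !dotDr !dotZl !dotZr.
  by rewrite (dot_trmx M P e) M_sym (dotC (M *m P) e); ring.
have fP_min x : f P <= f x.
  have -> : x = P + (x - P) by rewrite addrC subrK.
  by rewrite fE lerDl divr_ge0 // addr_ge0 ?dot_ge0 // mulr_ge0 // ltW.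
have f_min_uniq x : (forall x', f x <= f x') -> x = P.
  move=> xmin; apply/eqP; rewrite -subr_eq0; apply/negPn/negP => xP.
  have := fE (x - P); rewrite addrC subrK => fx.
  have : 0 < dot (x - P) (x - P) + tau * dot (x - P) (M *m (x - P)).
    by apply: ltr_pwDl; [exact: dot_gt0 | exact: mulr_ge0 (ltW tau0) (M_psd _)].
  by have := xmin P; lra.
exact/f_min_uniq/(xgetPex 0 (ex_intro (fun x => forall x', f x <= f x') P fP_min)).
Qed.

Lemma xseq_gprior tau y P : 0 < tau -> P + tau *: (M *m P) = y ->
  forall k, xseq gprior tau y k = P + k.+1%:R^-1 *: (y - P).
Proof.
move=> tau0 hP.
have MP : M *m P = tau^-1 *: (y - P).
  by rewrite -hP addrC addKr scalerA mulVf ?scale1r // gt_eqF.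
have MMSE_step k : MMSE gprior (sigma_k tau k) (P + k.+1%:R^-1 *: (y - P)) = P.
  apply: MMSE_gprior; first by rewrite sqrtr_gt0 divr_gt0 // ltr0Sn.
  rewrite sqr_sqrtr ?divr_ge0 ?ltW // MP; apply/matrixP => i j; rewrite !mxE.
  by field; rewrite gt_eqF //= gt_eqF.
elim=> [|k IH] /=; first by rewrite invr1 scale1r addrC subrK.
rewrite IH MMSE_step /alpha -[k.+2%:R]natr1; apply/matrixP => i j; rewrite !mxE.
by field; rewrite -mulrS natr1 pnatr_eq0.
Qed.

Lemma xseq_sub_prox tau y : 0 < tau -> forall k,
  xseq gprior tau y k - prox_neglog gprior tau y =
  k.+1%:R^-1 *: (y - prox_neglog gprior tau y).
Proof.
move=> tau0 k; set T := 1%:M + tau *: M.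
have T_unit : T \in unitmx.
  apply: posdef_unitmx => x x0; rewrite quadE mulmxDl mul1mx -scalemxAl dotDr dotZr.
  by apply: ltr_pwDl; [exact: dot_gt0 | exact: mulr_ge0 (ltW tau0) (M_psd x)].
set P := invmx T *m y.
have hP : P + tau *: (M *m P) = y.
  by rewrite -[P in P + _]mul1mx scalemxAl -mulmxDl mulmxA mulmxV ?mul1mx.
by rewrite (prox_gprior _ _ _ tau0 hP) (xseq_gprior _ _ _ tau0 hP) addrC addKr.
Qed.

End gaussian_prior.

Theorem proposition5 (R : realType) (d : nat) (Sigma : 'M[R]_d)
  (hS : posdef Sigma) (tau : R) (htau : 0 < tau) (y : 'cV[R]_d) :
  forall k : nat,
    xseq (gauss_density Sigma) tau y k - prox_neglog (gauss_density Sigma) tau y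
    = (k.+1%:R)^-1 *: (y - prox_neglog (gauss_density Sigma) tau y).
Proof.
case: hS => Ssym Spos.
have M_sym : (invmx Sigma)^T = invmx Sigma by rewrite trmx_inv Ssym.
have K_gt0 : 0 < (Num.sqrt ((2 * pi) ^+ d * \det Sigma))^-1.
  by rewrite invr_gt0 sqrtr_gt0 mulr_gt0 ?exprn_gt0 ?mulr_gt0 ?pi_gt0 ?posdef_det_gt0.
exact: xseq_sub_prox _ _ K_gt0 M_sym (posdef_invmx_ge0 _ Spos) _ y htau.
Qed.
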